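(* Let $T$ be a tournament with an even number of arcs. Then $T$ has a $\overrightarrow{P_3}$-decomposition if and only if $$a(X,Y)\le a(Y,X)+a(X)+a(Y)+a(Z,X)+a(Y,Z)$$ for every partition $V(T)=X\cup Y\cup Z$ into three pairwise disjoint (possibly empty) sets.
   Context: A tournament is an orientation of a complete graph. A $\overrightarrow{P_3}$-decomposition of a digraph $D$ is a partition of $A(D)$ into directed paths of length $2$ (pairs of arcs $(u,v),(v,w)$). For $X,Y\subseteq V(T)$, $a(X,Y)$ is the number of arcs with tail in $X$ and head in $Y$, and $a(X)=a(X,X)$. *)

From mathcomp Require Import all_boot.
Set Implicit Arguments. Unset Strict Implicit. Unset Printing Implicit Defensive.

Definition tournament (V : finType) (arc : rel V) : Prop :=
  (forall x, ~~ arc x x) /\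
  (forall x y, x != y -> (arc x y (+) arc y x)).

Definition arcs (V : finType) (arc : rel V) : {set V * V} :=
  [set p | arc p.1 p.2].

Definition a_ (V : finType) (arc : rel V) (X Y : {set V}) : nat :=
  #|[set p : V * V | [&& p.1 \in X, p.2 \in Y & arc p.1 p.2]]|.

(* A directed path of length 2, (u,v),(v,w), encoded as the triple (u,v,w). *)
Definition is_P3 (V : finType) (arc : rel V) (t : V * V * V) : bool :=
  arc t.1.1 t.1.2 && arc t.1.2 t.2.

Definition P3_arcs (V : finType) (t : V * V * V) : {set V * V} :=
  [set (t.1.1, t.1.2); (t.1.2, t.2)].

Definition P3_decomposition (V : finType) (arc : rel V) (P : {set V * V * V})
  : Prop :=
  (forall t, t \in P -> is_P3 arc t) /\
  partition [set P3_arcs t | t in P] (arcs arc) /\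
  {in P &, injective (@P3_arcs V)}.

Definition has_P3_decomposition (V : finType) (arc : rel V) : Prop :=
  exists P : {set V * V * V}, P3_decomposition arc P.

(* Call an arc (u, v) of a P3 marked when it is the second arc of its path
   (the path is centred at u) and unmarked when it is the first one (centred
   at v).  Arcs can be grouped into paths according to a marking iff at every
   vertex the unmarked in-arcs are as many as the marked out-arcs.  In a
   tournament the marked arcs may form any simple graph H, and the balance
   condition says that H has degree sequence indeg.  By the f-factor theorem
   for complete graphs, such an H exists iff the degree sum is even and
   f(T) + |T||S| <= f(S) + |T|(n-1) for disjoint S, T; for f = indeg and
   Z = V \ (S u T) this is the inequality of the theorem.  The f-factor
   theorem is proved by induction: lower the largest demand p and the least
   positive demand q by one, realise, and add the edge pq or switch an edge xy
   to px, qy.  Conversely, sending each arc of A(X,Y) to the other arc of its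
   path is injective into the arcs counted on the right-hand side. *)

From mathcomp Require Import all_boot zify.
Set Implicit Arguments. Unset Strict Implicit. Unset Printing Implicit Defensive.

Lemma sum_nat_card (T : finType) (A : {pred T}) : \sum_x (x \in A : nat) = #|A|.
Proof. by rewrite -sum1_card [RHS]big_mkcond. Qed.

Lemma sum_eq_in (T : finType) (S : {set T}) a :
  \sum_(x in S) (x == a : nat) = (a \in S).
Proof.
case: (boolP (a \in S)) => aS; last first.
  by rewrite big1 // => x xS; case: eqP => // xa; rewrite -xa xS in aS.
rewrite (big_setD1 a aS) eqxx big1 // => x; rewrite in_setD1 => /andP [xa _].
by rewrite (negbTE xa).
Qed.

(* [big_setU1] and [big_setD1] for sums over [nat], stated with [addn]
   itself rather than its monoid structure, so that [lia] can use them. *)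
Lemma sum_setU1 (T : finType) a (A : {set T}) :
  a \notin A -> forall F : T -> nat, \sum_(x in a |: A) F x = F a + \sum_(x in A) F x.
Proof. by move=> aA F; exact: big_setU1. Qed.

Lemma sum_setD1 (T : finType) a (A : {set T}) :
  a \in A -> forall F : T -> nat, \sum_(x in A) F x = F a + \sum_(x in A :\ a) F x.
Proof. by move=> aA F; exact: big_setD1. Qed.

Lemma sum_eq1 (T : finType) (a : T) : \sum_x (x == a : nat) = 1.
Proof. by rewrite -(card1 a) -sum_nat_card. Qed.

Lemma ltn_even_add m n : m < n -> ~~ odd (m + n) -> m.+1 < n.
Proof.
move=> lt_mn; rewrite ltn_neqAle lt_mn andbT.
by apply: contraNneq => <-; rewrite addnS /= addnn odd_double.
Qed.

Section CompleteGraphFactor.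
Variable V : finType.
Implicit Types (f : V -> nat) (H : rel V) (S T : {set V}).

Definition deg H v := \sum_w (H v w : nat).

Definition realizes H f :=
  [/\ irreflexive H, symmetric H & forall v, deg H v = f v].

Definition edge (a b : V) : rel V :=
  fun v w => (v == a) && (w == b) || (v == b) && (w == a).

Definition add_edge H a b : rel V := fun v w => H v w || edge a b v w.
Definition del_edge H a b : rel V := fun v w => H v w && ~~ edge a b v w.

(* Tutte's f-factor condition for the complete graph on [V] without its
   odd-component term, which [complete_graph_factor] replaces by the parity of
   the degree sum. *)
Definition factor_condition f :=
  forall S T, [disjoint S & T] ->
    \sum_(v in T) f v + #|T| * #|S| <= \sum_(v in S) f v + #|T| * #|V|.-1.

Lemma realizes_ext H f g : f =1 g -> realizes H f -> realizes H g.
Proof. by move=> fg [irr sym dg]; split=> // v; rewrite dg fg. Qed.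

Lemma edge_sym a b : symmetric (edge a b).
Proof. by move=> v w; rewrite /edge orbC andbC [(w == b) && _]andbC. Qed.

Lemma edge_irr a b : a != b -> irreflexive (edge a b).
Proof.
by move=> ab v; rewrite /edge; case: (eqVneq v a) => [->|_]; rewrite ?(negbTE ab) ?andbF.
Qed.

Lemma edgeE H a b v w : symmetric H -> edge a b v w -> H v w = H a b.
Proof. by move=> sym /orP [] /andP [/eqP -> /eqP ->]. Qed.

Lemma deg_edge a b v : a != b -> deg (edge a b) v = (v == a) + (v == b).
Proof.
move=> ab; rewrite /deg.
have -> : \sum_w (edge a b v w : nat) =
          \sum_w ((v == a) * (w == b) + (v == b) * (w == a)).
  apply: eq_bigr => w _; rewrite /edge.
  case: (eqVneq v a) => [va|_]; case: (eqVneq v b) => [vb|_] //=.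
  - by move: ab; rewrite -va -vb eqxx.
  - by rewrite orbF addn0 mul1n.
  - by rewrite mul1n.
by rewrite big_split -!big_distrr /= !sum_eq1 !muln1.
Qed.

Lemma realizes_add_edge H f a b : realizes H f -> a != b -> ~~ H a b ->
  realizes (add_edge H a b) (fun v => f v + (v == a) + (v == b)).
Proof.
move=> [irr sym dg] ab nHab; split.
- by move=> v; rewrite /add_edge irr edge_irr.
- by move=> v w; rewrite /add_edge sym edge_sym.
move=> v; rewrite -addnA -deg_edge // -dg /deg -big_split; apply: eq_bigr => w _.
rewrite /add_edge; case e: (edge a b v w); last by rewrite orbF /= addn0.
by rewrite (edgeE sym e) (negbTE nHab).
Qed.

Lemma realizes_del_edge H f a b : realizes H f -> a != b -> H a b ->
  realizes (del_edge H a b) (fun v => f v - (v == a) - (v == b)).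
Proof.
move=> [irr sym dg] ab Hab; split.
- by move=> v; rewrite /del_edge irr.
- by move=> v w; rewrite /del_edge sym edge_sym.
move=> v; rewrite -subnDA -deg_edge // -dg.
suff -> : deg H v = deg (del_edge H a b) v + deg (edge a b) v by rewrite addnK.
rewrite /deg -big_split; apply: eq_bigr => w _.
rewrite /del_edge; case e: (edge a b v w); last by rewrite andbT /= addn0.
by rewrite (edgeE sym e) Hab.
Qed.

Section Reduction.
Variables (f : V -> nat) (p q : V).
Hypotheses (f_cond : factor_condition f) (p_max : forall v, f v <= f p).
Hypotheses (pq : p != q) (fq_gt0 : 0 < f q).

Definition decr2 v := f v - (v == p) - (v == q).

Lemma fp_gt0 : 0 < f p.
Proof. exact: leq_trans fq_gt0 (p_max q). Qed.

Lemma f_decr2 v : f v = decr2 v + (v == p) + (v == q).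
Proof.
have := fp_gt0; rewrite /decr2.
case: (eqVneq v p) => [->|_]; first by rewrite (negbTE pq) /=; lia.
case: (eqVneq v q) => [vq|_] /=; last by lia.
by have := fq_gt0; rewrite -vq; lia.
Qed.

Lemma sum_decr2 : \sum_v f v = \sum_v decr2 v + 2.
Proof. by rewrite (eq_bigr _ (fun v _ => f_decr2 v)) !big_split /= !sum_eq1 -addnA. Qed.

Lemma sum_decr2_in S :
  \sum_(v in S) f v = \sum_(v in S) decr2 v + (p \in S) + (q \in S).
Proof. by rewrite (eq_bigr _ (fun v _ => f_decr2 v)) !big_split /= !sum_eq_in. Qed.

Lemma sum_le_max S : \sum_(v in S) f v <= #|S| * f p.
Proof. by rewrite -sum_nat_const; apply: leq_sum => v _. Qed.

Lemma factor_condition_small S T : f p + #|S| <= #|V|.-1 ->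
  \sum_(v in T) f v + #|T| * #|S| <= #|T| * #|V|.-1.
Proof.
move=> small; have := sum_le_max T.
have : #|T| * (f p + #|S|) <= #|T| * #|V|.-1 by rewrite leq_mul2l small orbT.
rewrite mulnDr; lia.
Qed.

(* The condition for [decr2] at [S, T] needs a slack of
   [(p \in S) + (q \in S) - (p \in T) - (q \in T)] in the one for [f];
   the next three lemmas provide it in the cases where it is positive. *)
Lemma slack_q S T : [disjoint S & T] -> q \in S -> p \notin S -> p \notin T ->
  \sum_(v in T) f v + #|T| * #|S| < \sum_(v in S) f v + #|T| * #|V|.-1.
Proof.
move=> dST qS pS pT.
have fq_S : f q <= \sum_(v in S) f v by rewrite (sum_setD1 qS) leq_addr.
case: (leqP (f p + #|S|) #|V|.-1) => [small|big].
  by have := factor_condition_small T small; lia.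
have dSpT : [disjoint S & p |: T].
  by rewrite -setI_eq0 setIUr (disjoint_setI0 dST) setU0 setI_eq0 disjoint_sym disjoints1.
have := f_cond dSpT; rewrite sum_setU1 // cardsU1 pT add1n !mulSn; lia.
Qed.

Lemma slack_p S T : [disjoint S & T] -> p \in S -> q \notin S -> q \notin T ->
  \sum_(v in T) f v + #|T| * #|S| < \sum_(v in S) f v + #|T| * #|V|.-1.
Proof.
move=> dST pS qS qT.
have fp_S : f p <= \sum_(v in S) f v by rewrite (sum_setD1 pS) leq_addr.
have := fp_gt0.
case: (leqP (f p + #|S|) #|V|.-1) => [small|big].
  by have := factor_condition_small T small; lia.
have cardST : #|S| + #|T| < #|V|.
  have := max_card (q |: (S :|: T)).
  by rewrite cardsU1 in_setU negb_or qS qT cardsU (disjoint_setI0 dST) cards0; lia.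
have := f_cond (disjointWl (subsetDl S [set p]) dST).
rewrite (sum_setD1 pS) (cardsD1 p S) pS mulnDr muln1; lia.
Qed.

Lemma sum_cover S T : [disjoint S & T] -> S :|: T = setT ->
  \sum_v f v = \sum_(v in S) f v + \sum_(v in T) f v.
Proof.
move=> dST cover; transitivity (\sum_(v in [predU S & T]) f v); last exact: bigU.
by apply: eq_bigl => v; rewrite !inE -in_setU cover in_setT.
Qed.

Lemma slack_pq S T : ~~ odd (\sum_v f v) ->
  [disjoint S & T] -> p \in S -> q \in S ->
  (\sum_(v in T) f v + #|T| * #|S|).+1 < \sum_(v in S) f v + #|T| * #|V|.-1.
Proof.
move=> even_f dST pS qS.
have fpq_S : f p + f q <= \sum_(v in S) f v.
  have qSp : q \in S :\ p by rewrite in_setD1 eq_sym pq.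
  by rewrite (sum_setD1 pS) leq_add2l (sum_setD1 qSp) leq_addr.
have fp := fp_gt0.
case: (leqP (f p + #|S|) #|V|.-1) => [small|big].
  by have := factor_condition_small T small; lia.
have qSp : q \in S :\ p by rewrite in_setD1 eq_sym pq.
have pSp : p \notin S :\ p by rewrite in_setD1 eqxx.
have := slack_q (disjointWl (subsetDl S [set p]) dST) qSp pSp (negbT (disjointFr dST pS)).
rewrite (sum_setD1 pS) [in X in _ -> X](cardsD1 p S) pS mulnDr muln1 => slack.
have cardR := cardsC (S :|: T).
rewrite cardsU (disjoint_setI0 dST) cards0 subn0 in cardR.
case: (posnP #|~: (S :|: T)|) => [R0|]; last by lia.
have cover : S :|: T = setT.
  apply/setP => v; move/eqP: R0; rewrite cards_eq0 => /eqP /setP /(_ v).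
  by rewrite in_setC in_set0 in_setT => /negbFE ->.
apply: ltn_even_add; first by lia.
move: cardR even_f; rewrite R0 addn0 (sum_cover dST cover).
rewrite (cardsD1 p S) pS add1n (sum_setD1 pS) => <-.
set s := #|S :\ p|; set t := #|T|; rewrite addSn /=.
set A := \sum_(v in T) f v; set B := \sum_(v in S :\ p) f v.
have -> : A + (t + t * s) + (f p + B + t * (s + t))
  = f p + B + A + (t * s).*2 + t * t.+1 by nia.
by rewrite !oddD oddM /= odd_double andbN !addbF.
Qed.

Lemma factor_condition_decr2 : ~~ odd (\sum_v f v) -> factor_condition decr2.
Proof.
move=> even_f S T dST; have := f_cond dST; rewrite !sum_decr2_in.
case pS: (p \in S); case qS: (q \in S); rewrite ?(disjointFr dST pS) ?(disjointFr dST qS).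
- by have := slack_pq even_f dST pS qS; rewrite !sum_decr2_in pS qS
    (disjointFr dST pS) (disjointFr dST qS) /=; lia.
- case qT: (q \in T); first by rewrite /=; lia.
  by have := slack_p dST pS (negbT qS) (negbT qT); rewrite !sum_decr2_in pS qS qT
    (disjointFr dST pS) /=; lia.
- case pT: (p \in T); first by rewrite /=; lia.
  by have := slack_q dST qS (negbT pS) (negbT pT); rewrite !sum_decr2_in pS qS pT
    (disjointFr dST qS) /=; lia.
- by case: (p \in T); case: (q \in T) => /=; lia.
Qed.

Hypothesis q_min : forall v, v != p -> 0 < f v -> f q <= f v.

Lemma switch_null H : realizes H decr2 -> H p q ->
    (forall x y, x != p -> ~~ H p x -> y != q -> ~~ H q y -> ~~ H x y) ->
  forall w, w != p -> ~~ H p w -> f w = 0.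
Proof.
move=> [irr sym dg] Hpq noswitch w wp nHpw; apply/eqP; rewrite -leqn0 leqNgt.
apply/negP => fw_gt0.
have wq : w != q by apply: contraNneq nHpw => ->.
(* every neighbour of [w] other than [p] is a neighbour of [q], and [p] is a
   neighbour of [q] but not of [w] *)
have nb z : (H w z : nat) + (z == p) <= (z == q) + H q z.
  case: (eqVneq z p) => [->|zp]; first by rewrite sym (negbTE nHpw) sym Hpq (negbTE pq).
  case: (eqVneq z q) => [//|zq]; case Hwz: (H w z) => //=.
  case Hqz: (H q z) => //.
  by have := noswitch w z wp nHpw zq (negbT Hqz); rewrite Hwz.
have : \sum_z ((H w z : nat) + (z == p)) <= \sum_z ((z == q) + H q z).
  by apply: leq_sum => z _; exact: nb.
rewrite !big_split /= !sum_eq1 -!/(deg H _) !dg.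
have := q_min wp fw_gt0; rewrite /decr2 (negbTE wp) (negbTE wq) eqxx.
by rewrite eq_sym (negbTE pq) /=; lia.
Qed.

Lemma exists_switch H : realizes H decr2 -> H p q ->
  exists x y, [/\ x != p, ~~ H p x, y != q, ~~ H q y & H x y].
Proof.
move=> HH Hpq.
case: (pickP (fun xy : V * V =>
    [&& xy.1 != p, ~~ H p xy.1, xy.2 != q, ~~ H q xy.2 & H xy.1 xy.2])).
  by case=> x y /and5P [? ? ? ? ?]; exists x, y.
move=> noswitch; exfalso.
have null : forall w, w != p -> ~~ H p w -> f w = 0.
  apply: switch_null HH Hpq _ => x y xp nHpx yq nHqy.
  by have := noswitch (x, y); rewrite /= xp nHpx yq nHqy /= => ->.
(* [V] is covered by [p], its neighbours and the null vertices [Z]; the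
   condition for [S = Z], [T = [set p]] says this is impossible. *)
pose Z := [set w | (w != p) && (f w == 0)].
have dZp : [disjoint Z & [set p]] by rewrite disjoint_sym disjoints1 inE eqxx.
have := f_cond dZp; rewrite big_set1 cards1 !mul1n big1; last first.
  by move=> w; rewrite inE => /andP [_ /eqP].
have : #|V| <= \sum_w ((w == p) + (w \in Z) + H p w).
  rewrite -sum1_card; apply: leq_sum => w _; case: (eqVneq w p) => //= wp.
  rewrite inE wp /=; case: (boolP (H p w)) => [|/(null w wp) ->]; by rewrite ?addn1.
case: HH => _ _ dg.
rewrite !big_split /= sum_eq1 sum_nat_card -/(deg H p) dg.
have := fp_gt0; rewrite /decr2 eqxx (negbTE pq) /=; lia.
Qed.

(* Either [p q] can be added to [H], or the switch [x y] to [p x], [q y]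
   adds one to the degrees of [p] and [q] only. *)
Lemma realizes_lift H : realizes H decr2 -> exists H', realizes H' f.
Proof.
move=> HH; have [irr sym dg] := HH.
case: (boolP (H p q)) => [Hpq | nHpq]; last first.
  exists (add_edge H p q); apply: realizes_ext (realizes_add_edge HH pq nHpq).
  by move=> v; rewrite -f_decr2.
have [x [y [xp nHpx yq nHqy Hxy]]] := exists_switch HH Hpq.
have xy : x != y by apply: contraTneq Hxy => ->; rewrite irr.
have xq : x != q by apply: contraNneq nHpx => ->.
have px : p != x by rewrite eq_sym.
have qy : q != y by rewrite eq_sym.
have H1 := realizes_del_edge HH xy Hxy.
have nH1px : ~~ del_edge H x y p x by rewrite /del_edge (negbTE nHpx).
have H2 := realizes_add_edge H1 px nH1px.
have nH2qy : ~~ add_edge (del_edge H x y) p x q y.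
  rewrite /add_edge /del_edge /edge (negbTE nHqy) (eq_sym q p) (negbTE pq).
  by rewrite (eq_sym q x) (negbTE xq).
have H3 := realizes_add_edge H2 qy nH2qy.
exists (add_edge (add_edge (del_edge H x y) p x) q y); apply: realizes_ext H3 => v /=.
have dx : 0 < decr2 x by rewrite -dg /deg (bigD1 y) // Hxy.
have dy : 0 < decr2 y by rewrite -dg /deg (bigD1 x) // sym Hxy.
rewrite [RHS]f_decr2; move: (v == p) (v == q) => b c.
case: (eqVneq v x) => [->|_]; first by rewrite (negbTE xy) /=; clear -dx; lia.
by case: (eqVneq v y) => [->|_] /=; clear -dy; lia.
Qed.

End Reduction.

Lemma exists_other_pos f p : factor_condition f -> 0 < f p ->
  exists2 q, q != p & 0 < f q.
Proof.
move=> f_cond fp_gt0.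
case: (pickP (fun q => (q != p) && (0 < f q))) => [q /andP [qp fq] | none].
  by exists q.
have dpp : [disjoint [set~ p] & [set p]] by rewrite disjoint_sym disjoints1 !inE eqxx.
have := f_cond _ _ dpp; rewrite big_set1 cards1 !mul1n cardsC1 big1; first by lia.
by move=> q; rewrite !inE => qp; have := none q; rewrite qp lt0n => /negbFE /eqP.
Qed.

Theorem complete_graph_factor f :
  ~~ odd (\sum_v f v) -> factor_condition f -> exists H, realizes H f.
Proof.
have [n] := ubnP (\sum_v f v); elim: n f => // n IHn f lt_sum even_f f_cond.
case: (pickP (fun v => 0 < f v)) => [v0 fv0_gt0 | f0]; last first.
  exists (fun _ _ => false); split=> // v; rewrite /deg big1 //.
  by have := f0 v; rewrite lt0n => /negbFE /eqP.
case: (@arg_maxnP _ v0 xpredT f isT) => p _ p_max.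
have fp_gt0 : 0 < f p := leq_trans fv0_gt0 (p_max v0 isT).
have [w wp fw_gt0] := exists_other_pos f_cond fp_gt0.
case: (@arg_minnP _ w (fun v => (v != p) && (0 < f v)) f); first by rewrite wp.
move=> q /andP [qp fq_gt0] q_min.
have pq : p != q by rewrite eq_sym.
have fp_max v : f v <= f p by exact: p_max.
have fq_min v : v != p -> 0 < f v -> f q <= f v by move=> vp fv; apply: q_min; rewrite vp.
have [H HH] : exists H, realizes H (decr2 f p q).
  apply: IHn.
  - by move: lt_sum; rewrite (sum_decr2 fp_max pq fq_gt0) addn2 ltnS; exact: ltnW.
  - by move: even_f; rewrite (sum_decr2 fp_max pq fq_gt0) addn2 /= negbK.
  - exact: factor_condition_decr2.
exact (realizes_lift f_cond fp_max pq fq_gt0 fq_min HH).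
Qed.

End CompleteGraphFactor.

Section ArcCounts.
Variables (V : finType) (arc : rel V).
Implicit Types (X Y S T : {set V}).

Definition indeg v := \sum_u (arc u v : nat).

Definition P3_condition : Prop :=
  forall X Y Z : {set V},
    [disjoint X & Y] -> [disjoint Y & Z] -> [disjoint X & Z] ->
    X :|: Y :|: Z = [set: V] ->
    a_ arc X Y <= a_ arc Y X + a_ arc X X + a_ arc Y Y + a_ arc Z X + a_ arc Y Z.

Lemma a_sum X Y : a_ arc X Y = \sum_(u in X) \sum_(v in Y) (arc u v : nat).
Proof.
rewrite /a_ -sum_nat_card.
rewrite (eq_bigr (fun e => [&& e.1 \in X, e.2 \in Y & arc e.1 e.2] : nat)) => [|e _];
  last by rewrite inE.
rewrite -(pair_bigA _ (fun u v => ([&& u \in X, v \in Y & arc u v] : nat))) /=.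
rewrite [RHS]big_mkcond; apply: eq_bigr => u _.
case: (u \in X) => /=; last by rewrite big1.
by rewrite [RHS]big_mkcond; apply: eq_bigr => v _; case: (v \in Y).
Qed.

Lemma a_setUl X1 X2 Y : [disjoint X1 & X2] ->
  a_ arc (X1 :|: X2) Y = a_ arc X1 Y + a_ arc X2 Y.
Proof.
move=> d; rewrite !a_sum.
transitivity (\sum_(u in [predU X1 & X2]) \sum_(v in Y) (arc u v : nat));
  last exact: bigU.
by apply: eq_bigl => u; rewrite !inE.
Qed.

Lemma a_setUr X Y1 Y2 : [disjoint Y1 & Y2] ->
  a_ arc X (Y1 :|: Y2) = a_ arc X Y1 + a_ arc X Y2.
Proof.
move=> d; rewrite !a_sum -big_split; apply: eq_bigr => u _ /=.
transitivity (\sum_(v in [predU Y1 & Y2]) (arc u v : nat)); last exact: bigU.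
by apply: eq_bigl => v; rewrite !inE.
Qed.

Lemma sum_indeg Y : \sum_(v in Y) indeg v = a_ arc setT Y.
Proof. by rewrite a_sum exchange_big /=; apply: eq_bigl => u; rewrite inE. Qed.

Lemma card_arcs : #|arcs arc| = \sum_v indeg v.
Proof.
rewrite /arcs -sum_nat_card /indeg exchange_big pair_bigA /=.
by apply: eq_bigr => -[u v]; rewrite inE.
Qed.

Hypothesis tour : tournament arc.

Lemma arc_irr : irreflexive arc.
Proof. by case: tour => irr _ v; exact: negbTE. Qed.

Lemma arc_xor u v : u != v -> (arc u v : nat) + arc v u = 1.
Proof. by case: tour => _ xor /xor; case: (arc u v); case: (arc v u). Qed.

Lemma a_disjoint_pair S T : [disjoint S & T] -> a_ arc S T + a_ arc T S = #|T| * #|S|.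
Proof.
move=> d; rewrite !a_sum (exchange_big _ _ _ (mem T)) -big_split /=.
rewrite mulnC -sum_nat_const; apply: eq_bigr => u uS.
rewrite -big_split -sum1_card /=; apply: eq_bigr => v vT.
by apply: arc_xor; apply: contraTneq vT => <-; rewrite (disjointFr d uS).
Qed.

Lemma indeg_outdeg v : indeg v + \sum_w (arc v w : nat) = #|V|.-1.
Proof.
rewrite /indeg -big_split /= (bigD1 v) //= arc_irr add0n.
by rewrite (eq_bigr (fun _ => 1)) => [|u uv]; [rewrite sum1_card cardC1 | exact: arc_xor].
Qed.

Lemma a_setT_pair T : a_ arc setT T + a_ arc T setT = #|T| * #|V|.-1.
Proof.
rewrite -sum_nat_const -sum_indeg !a_sum -big_split; apply: eq_bigr => v _ /=.
by rewrite -(indeg_outdeg v); congr (_ + _); apply: eq_bigl => u; rewrite inE.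
Qed.

Lemma factor_condition_indeg : P3_condition -> factor_condition indeg.
Proof.
move=> cond S T dST; set R := ~: (S :|: T).
have dTR : [disjoint T & R] by rewrite disjoints_subset setCK subsetUr.
have dSR : [disjoint S & R] by rewrite disjoints_subset setCK subsetUl.
have dSTR : [disjoint S :|: T & R] by rewrite disjoints_subset setCK.
have cover : S :|: T :|: R = setT by rewrite setUCr.
have a_setTl Y : a_ arc setT Y = a_ arc S Y + a_ arc T Y + a_ arc R Y.
  by rewrite -cover !a_setUl.
have a_setTr X : a_ arc X setT = a_ arc X S + a_ arc X T + a_ arc X R.
  by rewrite -cover !a_setUr.
have := cond S T R dST dTR dSR cover.
rewrite !sum_indeg -(a_disjoint_pair dST) -(a_setT_pair T) !a_setTl a_setTr; lia.
Qed.

End ArcCounts.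

Lemma index_enum_inj (T : finType) (A : {set T}) : {in A &, injective (index^~ (enum A))}.
Proof.
move=> x y xA yA /= e; rewrite -(nth_index x (s := enum A) (x := x)) ?mem_enum //.
by rewrite e nth_index // mem_enum.
Qed.

Lemma index_enum_match (T : finType) (A B : {set T}) x : #|A| = #|B| -> x \in A ->
  exists2 y, y \in B & index y (enum B) = index x (enum A).
Proof.
move=> AB xA; have ltx : index x (enum A) < size (enum B).
  by rewrite -cardE -AB cardE index_mem mem_enum.
exists (nth x (enum B) (index x (enum A))); first by rewrite -mem_enum mem_nth.
by rewrite index_uniq // enum_uniq.
Qed.

Lemma mem_P3_arcs (V : finType) (t : V * V * V) e :
  (e \in P3_arcs t) = (e == (t.1.1, t.1.2)) || (e == (t.1.2, t.2)).
Proof. by rewrite !inE. Qed.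

Section SplitDecomposition.
Variables (V : finType) (arc mark : rel V).

Definition split_in v := [set u | arc u v && ~~ mark u v].
Definition split_out v := [set w | arc v w && mark v w].

(* A marked arc [(v, w)] ends a path centred at [v], an unmarked arc
   [(u, v)] starts a path centred at [v]; at each centre the unmarked
   in-arcs and the marked out-arcs are paired off by their rank. *)
Definition split_paths : {set V * V * V} :=
  [set t | [&& t.1.1 \in split_in t.1.2, t.2 \in split_out t.1.2 &
             index t.1.1 (enum (split_in t.1.2)) == index t.2 (enum (split_out t.1.2))]].

Lemma split_paths_unique t1 t2 e : t1 \in split_paths -> t2 \in split_paths ->
  e \in P3_arcs t1 -> e \in P3_arcs t2 -> t1 = t2.
Proof.
case: t1 t2 => [[u1 v1] w1] [[u2 v2] w2].
rewrite !inE /= => /and3P [i1 o1 /eqP x1] /and3P [i2 o2 /eqP x2].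
case/orP=> /eqP -> /orP [] /eqP [] e1 e2; subst.
- by congr (_, _); apply: (@index_enum_inj _ (split_out v2)); rewrite ?inE // -x1 -x2.
- by move: i1 o2 => /andP [_ /negbTE ->] /andP [].
- by move: o1 i2 => /andP [_ ->] /andP [].
- by congr (_, _, _); apply: (@index_enum_inj _ (split_in v2)); rewrite ?inE // x1 x2.
Qed.

Hypothesis balanced : forall v, #|split_in v| = #|split_out v|.

Lemma split_paths_cover e : arc e.1 e.2 -> exists2 t, t \in split_paths & e \in P3_arcs t.
Proof.
case: e => u v /= uv; case: (boolP (mark u v)) => [muv | nmuv].
  have vo : v \in split_out u by rewrite inE uv muv.
  have [w wi wv] := index_enum_match (esym (balanced u)) vo.
  exists (w, u, v); last by rewrite mem_P3_arcs eqxx orbT.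
  by rewrite inE /= wi vo wv eqxx.
have ui : u \in split_in v by rewrite inE uv nmuv.
have [w wo wu] := index_enum_match (balanced v) ui.
exists (u, v, w); last by rewrite mem_P3_arcs eqxx.
by rewrite inE /= ui wo wu eqxx.
Qed.

Theorem split_paths_decomposition : P3_decomposition arc split_paths.
Proof.
split; [|split].
- by move=> [[u v] w]; rewrite !inE /is_P3 => /and3P [/andP [-> _] /andP [-> _] _].
- apply/and3P; split.
  + apply/eqP/setP => e; rewrite inE; apply/bigcupP/idP.
      case=> _ /imsetP [t tP ->]; move: tP; rewrite mem_P3_arcs !inE.
      by case/and3P=> /andP [a1 _] /andP [a2 _] _ /orP [] /eqP ->.
    by case/split_paths_cover=> t tP et; exists (P3_arcs t); first exact: imset_f.
  + apply/trivIsetP => _ _ /imsetP [t1 t1P ->] /imsetP [t2 t2P ->] ne.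
    rewrite -setI_eq0; apply/eqP/setP => e; rewrite !inE.
    apply/negP => /andP [e1 e2]; move/eqP: ne; apply.
    by rewrite (split_paths_unique t1P t2P (e := e)) // mem_P3_arcs.
  + by apply/imsetP => -[t _] /setP /(_ (t.1.1, t.1.2)); rewrite mem_P3_arcs eqxx inE.
- move=> t1 t2 t1P t2P e; apply: (split_paths_unique t1P t2P (e := (t1.1.1, t1.1.2))).
    by rewrite mem_P3_arcs eqxx.
  by rewrite -e mem_P3_arcs eqxx.
Qed.

End SplitDecomposition.

Lemma tournament_split_balanced (V : finType) (arc H : rel V) :
  tournament arc -> realizes H (indeg arc) ->
  forall v, #|split_in arc H v| = #|split_out arc H v|.
Proof.
move=> tour [irr sym dg] v.
have degE : deg H v = #|split_out arc H v| + \sum_u (arc u v && H u v : nat).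
  rewrite /deg -sum_nat_card -big_split; apply: eq_bigr => w _ /=.
  rewrite inE (sym w v); case: (eqVneq v w) => [<-|vw]; first by rewrite irr !andbF.
  by have := arc_xor tour vw; case: (arc v w); case: (arc w v); case: (H v w).
have indegE : indeg arc v = \sum_u (arc u v && H u v : nat) + #|split_in arc H v|.
  rewrite /indeg -sum_nat_card -big_split; apply: eq_bigr => u _ /=.
  by rewrite inE; case: (arc u v); case: (H u v).
apply/eqP; rewrite -(eqn_add2r (\sum_u (arc u v && H u v : nat))).
by rewrite addnC -indegE -dg degE.
Qed.

Definition other_arc (V : finType) (t : V * V * V) (e : V * V) :=
  if e == (t.1.1, t.1.2) then (t.1.2, t.2) else (t.1.1, t.1.2).

Lemma other_arc_inj (V : finType) (t : V * V * V) :
  {in P3_arcs t &, injective (other_arc t)}.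
Proof.
move=> e1 e2; rewrite /other_arc !mem_P3_arcs.
case: (eqVneq e1 (t.1.1, t.1.2)) => [->|_];
  case: (eqVneq e2 (t.1.1, t.1.2)) => [->|_] //=.
- by move=> _ /eqP -> e; rewrite e.
- by move=> /eqP -> _ e; rewrite e.
- by move=> /eqP -> /eqP ->.
Qed.

Section Necessity.
Variables (V : finType) (arc : rel V) (P : {set V * V * V}).
Hypothesis decP : P3_decomposition arc P.

Lemma decomposition_cover e : arc e.1 e.2 -> exists2 t, t \in P & e \in P3_arcs t.
Proof.
case: decP => _ [/and3P [/eqP cov _ _] _] he.
have : e \in cover [set P3_arcs t | t in P] by rewrite cov inE.
by case/bigcupP => _ /imsetP [t tP ->] et; exists t.
Qed.

Lemma decomposition_unique t1 t2 e : t1 \in P -> t2 \in P ->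
  e \in P3_arcs t1 -> e \in P3_arcs t2 -> t1 = t2.
Proof.
case: decP => _ [/and3P [_ triv _] inj] t1P t2P e1 e2; apply: inj => //.
case: (eqVneq (P3_arcs t1) (P3_arcs t2)) => // ne.
have := trivIsetP triv _ _ (imset_f _ t1P) (imset_f _ t2P) ne.
by rewrite -setI_eq0 => /eqP /setP /(_ e); rewrite in_setI e1 e2 in_set0.
Qed.

Definition mate e :=
  if [pick t in P | e \in P3_arcs t] is Some t then other_arc t e else e.

Lemma mateP e : arc e.1 e.2 ->
  exists t, [/\ t \in P, e \in P3_arcs t & mate e = other_arc t e].
Proof.
move=> he; rewrite /mate; case: pickP => [t /andP [tP et] | none]; first by exists t.
by have [t tP et] := decomposition_cover he; have := none t; rewrite tP et.
Qed.

Lemma mate_inj : {in arcs arc &, injective mate}.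
Proof.
move=> e1 e2; rewrite !inE => h1 h2.
have [t1 [t1P et1 ->]] := mateP h1; have [t2 [t2P et2 ->]] := mateP h2 => e.
have o1 : other_arc t1 e1 \in P3_arcs t1.
  by rewrite /other_arc !mem_P3_arcs; case: ifP; rewrite eqxx ?orbT.
have o2 : other_arc t2 e2 \in P3_arcs t2.
  by rewrite /other_arc !mem_P3_arcs; case: ifP; rewrite eqxx ?orbT.
rewrite e in o1; have t12 := decomposition_unique t1P t2P o1 o2; subst t2.
exact: other_arc_inj et1 et2 e.
Qed.

Lemma mate_adjacent e : arc e.1 e.2 ->
  arc (mate e).1 (mate e).2 /\ ((mate e).1 = e.2 \/ (mate e).2 = e.1).
Proof.
move=> he; have [t [tP et ->]] := mateP he.
case: decP => P3 _; have /andP [a1 a2] := P3 t tP.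
move: et; rewrite /other_arc mem_P3_arcs.
by case: eqP => [-> | _ /= /eqP ->]; split=> //; [left | right].
Qed.

Theorem P3_decomposition_condition : P3_condition arc.
Proof.
move=> X Y Z dXY dYZ dXZ cover.
have inXYZ w : [|| w \in X, w \in Y | w \in Z] by rewrite orbA -!in_setU cover in_setT.
pose ab (X' Y' : {set V}) := [set e : V * V | [&& e.1 \in X', e.2 \in Y' & arc e.1 e.2]].
have sub : mate @: ab X Y \subset
    ab Y X :|: ab X X :|: ab Y Y :|: ab Z X :|: ab Y Z.
  apply/subsetP => g /imsetP [e]; rewrite inE => /and3P [eX eY he] ->.
  have [arc_mate [m1 | m2]] := mate_adjacent he; rewrite !inE arc_mate !andbT.
    by rewrite m1 eY; case/or3P: (inXYZ (mate e).2) => ->; rewrite ?orbT.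
  by rewrite m2 eX; case/or3P: (inXYZ (mate e).1) => ->; rewrite ?orbT.
have inj : {in ab X Y &, injective mate}.
  by apply: sub_in2 mate_inj => e; rewrite !inE => /and3P [].
have := subset_leq_card sub; rewrite card_in_imset // => /leq_trans; apply.
rewrite /a_ /ab; do 3! (apply: (leq_trans (leq_card_setU _ _)); rewrite leq_add2r).
exact: leq_card_setU.
Qed.

End Necessity.

Theorem theorem3p2 (V : finType) (arc : rel V) :
  tournament arc ->
  ~~ odd #|arcs arc| ->
  (has_P3_decomposition arc <->
   forall X Y Z : {set V},
     [disjoint X & Y] -> [disjoint Y & Z] -> [disjoint X & Z] ->
     X :|: Y :|: Z = [set: V] ->
     a_ arc X Y <= a_ arc Y X + a_ arc X X + a_ arc Y Y + a_ arc Z X + a_ arc Y Z).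
Proof.
move=> tour even_arcs; split=> [[P decP] | cond].
  exact: P3_decomposition_condition decP.
rewrite card_arcs in even_arcs.
have [H HH] := complete_graph_factor even_arcs (factor_condition_indeg tour cond).
exists (split_paths arc H).
exact: split_paths_decomposition (tournament_split_balanced tour HH).
Qed.
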